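(* For all $\delta,B>0$ there are $C,d_0\ge 1$ such that the following holds. Let $M$ be a positive integer and let $A_1,\ldots,A_K\subset[-M,M]\cap\mathbb Z$ with $K\ge CM$ and $|A_i|\ge\delta M\ge 2$ for all $i\in[K]$. Then there are $a\in\mathbb Z$ and $d\in\mathbb N$ with $1\le d\le d_0$ such that $$\{a+id:\ 0\le i\le BM^2\}\subset A_1+A_2+\cdots+A_K,$$ where $A_1+\cdots+A_K=\{a_1+\cdots+a_K: a_i\in A_i\ \forall i\}$. *)

From Stdlib Require Import Reals ZArith List.
Open Scope R_scope.

Definition in_sumset (A : nat -> list Z) (K : nat) (x : Z) : Prop :=
  exists a : nat -> Z,
    (forall j : nat, (1 <= j <= K)%nat -> In (a j) (A j)) /\
    x = fold_right Z.add 0%Z (map a (seq 1 K)).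

(* Once g*delta > 4, delta*M points of [-M, M] cannot be pairwise g apart, so every A_i
   contains a pair at distance less than g; by pigeonhole one gap d < g occurs in at least
   (lam+2)*M of the first (lam+2)*g*M sets, each contributing a pair {x_i, x_i + d}. Every
   later set contains a pair {y_i, y_i + k_i*d} with 0 <= k_i <= 2M and (k_i+1)*d >= |A_i|
   (the extreme points of a residue class mod d met at least |A_i|/d times). So the sumset
   contains a + d*S, with S the subset sums of a sequence that starts with at least 2M ones
   and continues with terms at most 2M; these fill [0, sum k_i], and lam*M long pairs make
   g * sum k_i >= lam*M*delta*M, which exceeds g*B*M^2 once lam*delta >= g*B. *)
From Stdlib Require Import Reals ZArith List Lia Lra Psatz ClassicalEpsilon.
Open Scope R_scope.

Definition sum_to (f : nat -> Z) (n : nat) : Z := fold_right Z.add 0%Z (map f (seq 1 n)).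

Section Integers.
Local Open Scope Z_scope.

Lemma fold_right_Zadd_init (c : Z) (l : list Z) :
  fold_right Z.add c l = fold_right Z.add 0 l + c.
Proof. induction l as [|x l IH]; simpl; [reflexivity | rewrite IH; ring]. Qed.

Lemma sum_to_S (f : nat -> Z) (n : nat) : sum_to f (S n) = sum_to f n + f (S n).
Proof.
  unfold sum_to. rewrite seq_S, map_app, fold_right_app. simpl.
  rewrite fold_right_Zadd_init. ring.
Qed.

Lemma sum_to_ext (f g : nat -> Z) (n : nat) :
  (forall i, (1 <= i <= n)%nat -> f i = g i) -> sum_to f n = sum_to g n.
Proof.
  intros H. unfold sum_to. f_equal. apply map_ext_in.
  intros i Hi. apply in_seq in Hi. apply H. lia.
Qed.

Lemma sum_to_add_mul (f g : nat -> Z) (c : Z) (n : nat) :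
  sum_to (fun i => f i + g i * c) n = sum_to f n + sum_to g n * c.
Proof. induction n as [|n IH]; [reflexivity|]. rewrite !sum_to_S, IH. ring. Qed.

Lemma sum_to_le_of_nonneg (f : nat -> Z) (m n : nat) : (m <= n)%nat ->
  (forall i, (m < i <= n)%nat -> 0 <= f i) -> sum_to f m <= sum_to f n.
Proof.
  induction 1 as [|n Hmn IH]; intros Hf; [lia|].
  rewrite sum_to_S.
  assert (sum_to f m <= sum_to f n) by (apply IH; intros; apply Hf; lia).
  specialize (Hf (S n) ltac:(lia)). lia.
Qed.

Lemma sum_to_indicator (p : nat -> bool) (n : nat) :
  sum_to (fun i => if p i then 1 else 0) n = Z.of_nat (length (filter p (seq 1 n))).
Proof.
  induction n as [|n IH]; [reflexivity|].
  rewrite sum_to_S, IH, seq_S, filter_app, length_app. simpl.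
  destruct (p (S n)); simpl; lia.
Qed.

Lemma sum_to_select_S (k : nat -> Z) (e : nat -> bool) (b : bool) (n : nat) :
  sum_to (fun i => if (if (i =? S n)%nat then b else e i) then k i else 0) (S n)
  = sum_to (fun i => if e i then k i else 0) n + (if b then k (S n) else 0).
Proof.
  rewrite sum_to_S, Nat.eqb_refl. f_equal. apply sum_to_ext.
  intros i Hi. replace (i =? S n)%nat with false by (symmetry; apply Nat.eqb_neq; lia).
  reflexivity.
Qed.

Lemma subset_sums_fill_interval (k : nat -> Z) (n : nat) :
  (forall i, (1 <= i <= n)%nat -> 0 <= k i <= 1 + sum_to k (i - 1)) ->
  forall t, 0 <= t <= sum_to k n ->
  exists e : nat -> bool, sum_to (fun i => if e i then k i else 0) n = t.
Proof.
  induction n as [|n IH]; intros Hk t Ht.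
  - exists (fun _ => false). unfold sum_to in *. simpl in *. lia.
  - rewrite sum_to_S in Ht.
    pose proof (Hk (S n) ltac:(lia)) as Hkn.
    replace (S n - 1)%nat with n in Hkn by lia.
    assert (Hk' : forall i, (1 <= i <= n)%nat -> 0 <= k i <= 1 + sum_to k (i - 1))
      by (intros i Hi; apply Hk; lia).
    destruct (Z_le_gt_dec t (sum_to k n)) as [Hle|Hgt].
    + destruct (IH Hk' t ltac:(lia)) as [e He].
      exists (fun i => if (i =? S n)%nat then false else e i).
      rewrite sum_to_select_S, He. lia.
    + destruct (IH Hk' (t - k (S n)) ltac:(lia)) as [e He].
      exists (fun i => if (i =? S n)%nat then true else e i).
      rewrite sum_to_select_S, He. lia.
Qed.

Lemma complete_after_unit_prefix (k : nat -> Z) (m n : nat) (W : Z) :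
  (forall i, (1 <= i <= m)%nat -> 0 <= k i <= 1) ->
  (forall i, (m < i <= n)%nat -> 0 <= k i <= W) ->
  W <= 1 + sum_to k m ->
  forall i, (1 <= i <= n)%nat -> 0 <= k i <= 1 + sum_to k (i - 1).
Proof.
  intros Hunit Hbig HW i Hi.
  destruct (Nat.le_gt_cases i m) as [Him|Him].
  - assert (Hprefix : 0 <= sum_to k (i - 1))
      by (apply (sum_to_le_of_nonneg k 0); [lia | intros j Hj; apply Hunit; lia]).
    specialize (Hunit i ltac:(lia)). lia.
  - assert (sum_to k m <= sum_to k (i - 1))
      by (apply sum_to_le_of_nonneg; [lia | intros j Hj; apply Hbig; lia]).
    specialize (Hbig i ltac:(lia)). lia.
Qed.

Lemma in_sumset_progression (A : nat -> list Z) (K : nat) (x k : nat -> Z) (d : Z) :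
  (forall i, (1 <= i <= K)%nat -> In (x i) (A i) /\ In (x i + k i * d) (A i)) ->
  (forall i, (1 <= i <= K)%nat -> 0 <= k i <= 1 + sum_to k (i - 1)) ->
  forall t, 0 <= t <= sum_to k K -> in_sumset A K (sum_to x K + t * d).
Proof.
  intros Hpairs Hk t Ht.
  destruct (subset_sums_fill_interval k K Hk t Ht) as [e He].
  exists (fun i => x i + (if e i then k i else 0) * d). split.
  - intros i Hi. destruct (Hpairs i Hi). destruct (e i); [assumption|].
    rewrite Z.mul_0_l, Z.add_0_r. assumption.
  - rewrite <- He. symmetry. apply sum_to_add_mul.
Qed.

Lemma length_filter_filter_le {T} (p q : T -> bool) (l : list T) :
  (length (filter p (filter q l)) <= length (filter p l))%nat.
Proof.
  induction l as [|x l IH]; simpl; [lia|].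
  destruct (q x); simpl; destruct (p x); simpl; lia.
Qed.

Lemma pigeonhole_value {T} (f : T -> Z) (n : nat) (l : list T) :
  (forall x, In x l -> 0 <= f x < Z.of_nat n) ->
  exists v, Z.of_nat (length l)
            <= Z.of_nat n * Z.of_nat (length (filter (fun x => f x =? v) l)).
Proof.
  revert l; induction n as [|n IH]; intros l Hl.
  - exists 0. destruct l as [|x l]; [simpl; lia|].
    specialize (Hl x (or_introl eq_refl)). lia.
  - set (c := length (filter (fun x => f x =? Z.of_nat n) l)).
    destruct (Z_le_gt_dec (Z.of_nat (length l)) (Z.of_nat (S n) * Z.of_nat c)) as [Hc|Hc].
    { exists (Z.of_nat n). exact Hc. }
    set (l' := filter (fun x => negb (f x =? Z.of_nat n)) l).
    destruct (IH l') as [v Hv].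
    { intros x Hx. apply filter_In in Hx as [Hx Hxn].
      apply Bool.negb_true_iff, Z.eqb_neq in Hxn. specialize (Hl x Hx). lia. }
    exists v.
    pose proof (filter_length (fun x => f x =? Z.of_nat n) l) as Hsplit.
    pose proof (length_filter_filter_le (fun x => f x =? v)
                  (fun x => negb (f x =? Z.of_nat n)) l) as Hsub.
    cbv beta in Hsplit. fold c l' in Hsplit, Hsub.
    set (cv := length (filter (fun x => f x =? v) l)) in *.
    set (cv' := length (filter (fun x => f x =? v) l')) in *.
    assert (HN : Z.of_nat c + Z.of_nat (length l') = Z.of_nat (length l)) by lia.
    rewrite Nat2Z.inj_succ in *.
    destruct (Z_le_gt_dec (Z.of_nat (length l)) (Z.succ (Z.of_nat n) * Z.of_nat cv))
      as [Hdone|Hcontra]; [exact Hdone|exfalso].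
    assert (Z.succ (Z.of_nat n) * Z.of_nat (length l')
            <= Z.of_nat n * (Z.succ (Z.of_nat n) * Z.of_nat cv)) by nia.
    nia.
Qed.

Lemma close_pair (l : list Z) (lo w g : Z) :
  NoDup l -> (forall x, In x l -> lo <= x <= lo + w) -> 0 <= w -> 0 < g ->
  w < g * (Z.of_nat (length l) - 1) ->
  exists x y, In x l /\ In y l /\ 0 < y - x < g.
Proof.
  intros Hnd Hl Hw Hg Hlen.
  pose proof (Z.div_pos w g Hw Hg).
  destruct (pigeonhole_value (fun x => (x - lo) / g) (Z.to_nat (w / g + 1)) l) as [v Hv].
  { intros x Hx. specialize (Hl x Hx). rewrite Z2Nat.id by lia.
    assert ((x - lo) / g <= w / g) by (apply Z.div_le_mono; lia).
    pose proof (Z.div_pos (x - lo) g ltac:(lia) Hg). lia. }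
  rewrite Z2Nat.id in Hv by lia.
  pose proof (Z.mul_div_le w g Hg).
  remember (filter (fun x => (x - lo) / g =? v) l) as block eqn:Hblock.
  assert (Hnd' : NoDup block) by (subst; apply NoDup_filter, Hnd).
  assert (Hin : forall x, In x block -> In x l /\ (x - lo) / g = v).
  { intros x Hx. subst. apply filter_In in Hx as [Hx Hxv]. apply Z.eqb_eq in Hxv. auto. }
  destruct block as [|x [|y rest]]; simpl in Hv; [nia | nia |].
  apply NoDup_cons_iff in Hnd' as [Hxy _].
  destruct (Hin x (or_introl eq_refl)) as [Hx Hxv].
  destruct (Hin y (or_intror (or_introl eq_refl))) as [Hy Hyv].
  pose proof (Z_div_mod_eq_full (x - lo) g). pose proof (Z.mod_pos_bound (x - lo) g Hg).
  pose proof (Z_div_mod_eq_full (y - lo) g). pose proof (Z.mod_pos_bound (y - lo) g Hg).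
  destruct (Z.lt_total x y) as [Hlt|[Heq|Hgt]].
  - exists x, y. repeat split; auto; nia.
  - subst y. simpl in Hxy. tauto.
  - exists y, x. repeat split; auto; nia.
Qed.

Lemma exists_min_max (l : list Z) : l <> nil ->
  exists u w, In u l /\ In w l /\ forall x, In x l -> u <= x <= w.
Proof.
  induction l as [|a l IH]; intros Hne; [congruence|].
  destruct l as [|b l].
  - exists a, a. simpl. intuition (subst; lia).
  - destruct IH as [u [w [Hu [Hw Hb]]]]; [discriminate|].
    exists (Z.min a u), (Z.max a w). split; [|split].
    + destruct (Z.min_spec a u) as [[_ ->]|[_ ->]]; [left | right]; auto.
    + destruct (Z.max_spec a w) as [[_ ->]|[_ ->]]; [right | left]; auto.
    + intros x [<-|Hx]; [lia|]. specialize (Hb x Hx). lia.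
Qed.

Lemma long_progression_pair (l : list Z) (d : Z) : NoDup l -> l <> nil -> 0 < d ->
  exists x k, In x l /\ In (x + k * d) l /\ 0 <= k /\ Z.of_nat (length l) <= (k + 1) * d.
Proof.
  intros Hnd Hne Hd.
  destruct (pigeonhole_value (fun x => x mod d) (Z.to_nat d) l) as [v Hv].
  { intros x _. rewrite Z2Nat.id by lia. apply Z.mod_pos_bound, Hd. }
  rewrite Z2Nat.id in Hv by lia.
  set (cls := filter (fun x => x mod d =? v) l) in Hv.
  assert (Hcls : forall x, In x cls -> In x l /\ x mod d = v).
  { intros x Hx. apply filter_In in Hx as [Hx Hxv]. apply Z.eqb_eq in Hxv. auto. }
  assert (Hne' : cls <> nil).
  { intros E. rewrite E in Hv. destruct l; [congruence|]. simpl in Hv. lia. }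
  destruct (exists_min_max cls Hne') as [u [w [Hu [Hw Hext]]]].
  destruct (Hcls u Hu) as [Hul Hud], (Hcls w Hw) as [Hwl Hwd].
  pose proof (Z_div_mod_eq_full u d). pose proof (Z_div_mod_eq_full w d).
  assert (Huw : u <= w) by (apply Hext, Hu).
  set (k := w / d - u / d).
  assert (Hwu : w = u + k * d) by (unfold k; nia).
  assert (Hk : 0 <= k) by nia.
  exists u, k. rewrite <- Hwu.
  split; [exact Hul|]. split; [exact Hwl|]. split; [exact Hk|].
  (* Members of cls are congruent mod d, so close_pair (with gap bound d) must fail on cls. *)
  assert (Hcnt : Z.of_nat (length cls) <= k + 1).
  { destruct (Z_le_gt_dec (Z.of_nat (length cls)) (k + 1)) as [|Hgt];
      [assumption | exfalso].
    destruct (close_pair cls u (w - u) d) as [x [y [Hx [Hy Hxy]]]];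
      [apply NoDup_filter, Hnd | intros x Hx; specialize (Hext x Hx); lia | lia | lia | |].
    { assert (d * (k + 1) <= d * (Z.of_nat (length cls) - 1))
        by (apply Z.mul_le_mono_nonneg_l; lia).
      lia. }
    destruct (Hcls x Hx) as [_ Hxd], (Hcls y Hy) as [_ Hyd].
    pose proof (Z_div_mod_eq_full x d). pose proof (Z_div_mod_eq_full y d).
    assert (Hyx : y - x = d * (y / d - x / d)) by lia.
    destruct (Z_le_gt_dec (y / d - x / d) 0); nia. }
  nia.
Qed.

Lemma frequent_value_on_range (g : nat) (f : nat -> Z) (n : nat) : (1 <= n)%nat ->
  (forall i, (1 <= i <= n)%nat -> 0 < f i < Z.of_nat g) ->
  exists v, 0 < v < Z.of_nat g /\
    Z.of_nat n <= Z.of_nat g * sum_to (fun i => if f i =? v then 1 else 0) n.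
Proof.
  intros Hn Hf.
  destruct (pigeonhole_value f g (seq 1 n)) as [v Hv].
  { intros i Hi. apply in_seq in Hi. specialize (Hf i ltac:(lia)). lia. }
  rewrite length_seq, <- sum_to_indicator in Hv.
  exists v. split; [|exact Hv].
  destruct (filter (fun i => f i =? v) (seq 1 n)) as [|i l] eqn:E.
  - rewrite sum_to_indicator, E in Hv. simpl in Hv. lia.
  - assert (Hi : In i (filter (fun i => f i =? v) (seq 1 n))) by (rewrite E; left; reflexivity).
    apply filter_In in Hi as [Hi Hiv]. apply in_seq in Hi. apply Z.eqb_eq in Hiv.
    rewrite <- Hiv. apply Hf. lia.
Qed.

End Integers.

Lemma choice_on_range {B : Type} (P : nat -> B -> Prop) (K : nat) (b0 : B) :
  (forall i, (1 <= i <= K)%nat -> exists b, P i b) ->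
  exists f : nat -> B, forall i, (1 <= i <= K)%nat -> P i (f i).
Proof.
  intros H. apply (choice (fun i b => (1 <= i <= K)%nat -> P i b)). intros i.
  destruct (le_dec 1 i), (le_dec i K); try (exists b0; lia).
  destruct (H i ltac:(lia)) as [b Hb]. exists b. intros _. exact Hb.
Qed.

Lemma sum_to_lower_bound (f : nat -> Z) (c : R) (m L n : nat) : (m + L <= n)%nat ->
  (forall i, (m < i <= n)%nat -> (0 <= f i)%Z) ->
  (forall i, (m < i <= m + L)%nat -> c <= IZR (f i)) ->
  IZR (sum_to f m) + INR L * c <= IZR (sum_to f n).
Proof.
  intros HmLn Hnonneg Hc.
  apply Rle_trans with (IZR (sum_to f (m + L))).
  - clear HmLn Hnonneg. induction L as [|L IH].
    + rewrite Nat.add_0_r. simpl. lra.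
    + rewrite Nat.add_succ_r, sum_to_S, plus_IZR, S_INR.
      assert (IZR (sum_to f m) + INR L * c <= IZR (sum_to f (m + L)))
        by (apply IH; intros; apply Hc; lia).
      specialize (Hc (S (m + L)) ltac:(lia)). lra.
  - apply IZR_le, sum_to_le_of_nonneg; [exact HmLn|].
    intros i Hi. apply Hnonneg. lia.
Qed.

Lemma spread_of_density (delta : R) (g M len : nat) :
  4 < INR g * delta -> 2 <= delta * INR M -> delta * INR M <= INR len ->
  (2 * Z.of_nat M < Z.of_nat g * (Z.of_nat len - 1))%Z.
Proof.
  intros Hg HM Hlen.
  apply lt_IZR. rewrite !mult_IZR, minus_IZR, <- !INR_IZR_INZ.
  assert (HM0 : 0 < INR M).
  { destruct M as [|M]; [simpl in HM; lra | apply lt_0_INR; lia]. }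
  assert (0 < (INR g * delta - 4) * INR M) by (apply Rmult_lt_0_compat; lra).
  assert (INR g * (delta * INR M) <= 2 * INR g * (INR len - 1)) by (pose proof (pos_INR g); nra).
  nra.
Qed.

Section Construction.
Local Open Scope Z_scope.

Variables (M g lam K : nat) (r : R) (A : nat -> list Z).
Hypothesis HM : (1 <= M)%nat.
Hypothesis Hg : (1 <= g)%nat.
Hypothesis HK : (((lam + 2) * g + lam) * M <= K)%nat.
Hypothesis HA_nodup : forall i, (1 <= i <= K)%nat -> NoDup (A i).
Hypothesis HA_bound :
  forall i x, (1 <= i <= K)%nat -> In x (A i) -> - Z.of_nat M <= x <= Z.of_nat M.
Hypothesis HA_spread :
  forall i, (1 <= i <= K)%nat -> 2 * Z.of_nat M < Z.of_nat g * (Z.of_nat (length (A i)) - 1).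
Hypothesis HA_large : forall i, (1 <= i <= K)%nat -> (r <= INR (length (A i)))%R.

Lemma close_pair_at (i : nat) : (1 <= i <= K)%nat ->
  exists p : Z * Z,
    In (fst p) (A i) /\ In (fst p + snd p) (A i) /\ 0 < snd p < Z.of_nat g.
Proof.
  intros Hi.
  destruct (close_pair (A i) (- Z.of_nat M) (2 * Z.of_nat M) (Z.of_nat g))
    as [x [y [Hx [Hy Hxy]]]]; auto; try lia.
  - intros x Hx. specialize (HA_bound i x Hi Hx). lia.
  - exists (x, y - x). simpl. replace (x + (y - x)) with y by ring. auto.
Qed.

Lemma progression_pair_at (d : Z) : 0 < d -> forall i, (1 <= i <= K)%nat ->
  exists q : Z * Z,
    In (fst q) (A i) /\ In (fst q + snd q * d) (A i) /\ 0 <= snd q /\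
    Z.of_nat (length (A i)) <= (snd q + 1) * d.
Proof.
  intros Hd i Hi.
  destruct (long_progression_pair (A i) d) as [x [k Hxk]]; auto.
  - intros E. specialize (HA_spread i Hi). rewrite E in HA_spread. simpl length in HA_spread. lia.
  - exists (x, k). exact Hxk.
Qed.

Let K1 := ((lam + 2) * g * M)%nat.

Section Selection.

Variables (p q : nat -> Z * Z) (d : Z).
Hypothesis Hp : forall i, (1 <= i <= K)%nat ->
  In (fst (p i)) (A i) /\ In (fst (p i) + snd (p i)) (A i) /\ 0 < snd (p i) < Z.of_nat g.
Hypothesis Hq : forall i, (1 <= i <= K)%nat ->
  In (fst (q i)) (A i) /\ In (fst (q i) + snd (q i) * d) (A i) /\ 0 <= snd (q i) /\
  Z.of_nat (length (A i)) <= (snd (q i) + 1) * d.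
Hypothesis Hd : 0 < d < Z.of_nat g.
Hypothesis Hfreq :
  Z.of_nat K1 <= Z.of_nat g * sum_to (fun i => if snd (p i) =? d then 1 else 0) K1.

Definition anchor (i : nat) : Z :=
  if ((i <=? K1)%nat && (snd (p i) =? d))%bool then fst (p i) else fst (q i).

Definition span (i : nat) : Z :=
  if (i <=? K1)%nat then (if snd (p i) =? d then 1 else 0) else snd (q i).

Lemma anchor_span_in (i : nat) : (1 <= i <= K)%nat ->
  In (anchor i) (A i) /\ In (anchor i + span i * d) (A i).
Proof.
  intros Hi. destruct (Hp i Hi) as [Hp1 [Hp2 _]], (Hq i Hi) as [Hq1 [Hq2 _]].
  unfold anchor, span.
  destruct (i <=? K1)%nat; [destruct (snd (p i) =? d) eqn:E|]; cbn [andb].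
  - apply Z.eqb_eq in E. rewrite Z.mul_1_l, <- E. auto.
  - rewrite Z.mul_0_l, Z.add_0_r. auto.
  - auto.
Qed.

Lemma span_unit (i : nat) : (1 <= i <= K1)%nat -> 0 <= span i <= 1.
Proof.
  intros Hi. unfold span.
  replace (i <=? K1)%nat with true by (symmetry; apply Nat.leb_le; lia).
  destruct (snd (p i) =? d); lia.
Qed.

Lemma sum_span_unit_block : Z.of_nat ((lam + 2) * M) <= sum_to span K1.
Proof.
  rewrite (sum_to_ext span (fun i => if snd (p i) =? d then 1 else 0)).
  - assert (Z.of_nat K1 = Z.of_nat g * Z.of_nat ((lam + 2) * M)) by (unfold K1; lia).
    apply (Z.mul_le_mono_pos_l _ _ (Z.of_nat g)); lia.
  - intros i Hi. unfold span.
    replace (i <=? K1)%nat with true by (symmetry; apply Nat.leb_le; lia).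
    reflexivity.
Qed.

Lemma span_long (i : nat) : (K1 < i <= K)%nat ->
  0 <= span i <= 2 * Z.of_nat M /\ (r / INR g - 1 <= IZR (span i))%R.
Proof.
  intros Hi. unfold span.
  replace (i <=? K1)%nat with false by (symmetry; apply Nat.leb_gt; lia).
  assert (Hi' : (1 <= i <= K)%nat) by (unfold K1 in *; nia).
  destruct (Hq i Hi') as [Hq1 [Hq2 [Hq3 Hq4]]].
  pose proof (HA_bound i _ Hi' Hq1). pose proof (HA_bound i _ Hi' Hq2).
  split; [nia|].
  assert (Hr : (r <= (IZR (snd (q i)) + 1) * INR g)%R).
  { apply Rle_trans with (INR (length (A i))); [apply HA_large, Hi'|].
    rewrite INR_IZR_INZ, (INR_IZR_INZ g), <- plus_IZR, <- mult_IZR.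
    apply IZR_le. nia. }
  assert (HG : (0 < INR g)%R) by (apply lt_0_INR; lia).
  apply Rmult_le_reg_r with (INR g); [exact HG|].
  replace ((r / INR g - 1) * INR g)%R with (r - INR g)%R by (field; lra).
  lra.
Qed.

Lemma span_complete (i : nat) : (1 <= i <= K)%nat ->
  0 <= span i <= 1 + sum_to span (i - 1).
Proof.
  apply (complete_after_unit_prefix span K1 K (2 * Z.of_nat M)).
  - exact span_unit.
  - intros j Hj. apply span_long, Hj.
  - pose proof sum_span_unit_block. lia.
Qed.

Lemma sum_span_large : (INR lam * INR M * r <= INR g * IZR (sum_to span K))%R.
Proof.
  assert (HG : (0 < INR g)%R) by (apply lt_0_INR; lia).
  assert (Hsum : (IZR (sum_to span K1) + INR (lam * M) * (r / INR g - 1)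
                  <= IZR (sum_to span K))%R).
  { apply sum_to_lower_bound; [unfold K1; nia | |].
    - intros i Hi. apply span_long. lia.
    - intros i Hi. apply span_long. unfold K1 in *. nia. }
  pose proof sum_span_unit_block as Hunit. apply IZR_le in Hunit.
  rewrite <- INR_IZR_INZ, !mult_INR, plus_INR in *. simpl (INR 2) in Hunit.
  pose proof (pos_INR lam). pose proof (pos_INR M).
  assert (INR g * (INR lam * INR M) <= INR g * IZR (sum_to span K1))%R
    by (apply Rmult_le_compat_l; nra).
  assert (INR g * (IZR (sum_to span K1) + INR lam * INR M * (r / INR g - 1))
          <= INR g * IZR (sum_to span K))%R
    by (apply Rmult_le_compat_l; lra).
  assert (INR g * (IZR (sum_to span K1) + INR lam * INR M * (r / INR g - 1))
          = INR g * IZR (sum_to span K1) + INR lam * INR M * r - INR g * (INR lam * INR M))%R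
    by (field; lra).
  lra.
Qed.

End Selection.

Theorem sumset_contains_progression :
  exists a (d : nat), (1 <= d < g)%nat /\
    forall t, 0 <= t -> (INR g * IZR t <= INR lam * INR M * r)%R ->
      in_sumset A K (a + t * Z.of_nat d).
Proof.
  destruct (choice_on_range _ K (0, 0) close_pair_at) as [p Hp].
  destruct (frequent_value_on_range g (fun i => snd (p i)) K1) as [d [Hd Hfreq]].
  { unfold K1. nia. }
  { intros i Hi. apply Hp. unfold K1 in *. nia. }
  destruct (choice_on_range _ K (0, 0) (progression_pair_at d ltac:(lia))) as [q Hq].
  exists (sum_to (anchor p q d) K), (Z.to_nat d). split; [lia|].
  intros t Ht0 Ht. rewrite Z2Nat.id by lia.
  apply (in_sumset_progression A K _ (span p q d)); [apply anchor_span_in; assumption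
                               | apply span_complete; assumption |].
  split; [exact Ht0|].
  pose proof (sum_span_large p q d Hq Hd Hfreq) as Hsum.
  apply le_IZR, (Rmult_le_reg_l (INR g)); [apply lt_0_INR; lia | lra].
Qed.

End Construction.

Theorem lemma2p12 :
  forall delta B : R, 0 < delta -> 0 < B ->
  exists C d0 : R, 1 <= C /\ 1 <= d0 /\
    forall (M K : nat) (A : nat -> list Z),
      (1 <= M)%nat ->
      C * INR M <= INR K ->
      (forall i : nat, (1 <= i <= K)%nat ->
         NoDup (A i) /\
         (forall x : Z, In x (A i) -> (- Z.of_nat M <= x <= Z.of_nat M)%Z) /\
         delta * INR M <= INR (length (A i))) ->
      2 <= delta * INR M ->
      exists (a : Z) (d : nat),
        (1 <= d)%nat /\ INR d <= d0 /\
        forall i : Z, (0 <= i)%Z -> IZR i <= B * INR M ^ 2 ->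
          in_sumset A K (a + i * Z.of_nat d)%Z.
Proof.
  intros delta B Hdelta HB.
  destruct (INR_archimed delta 4 Hdelta) as [g Hg].
  destruct (INR_archimed delta (INR g * B) Hdelta) as [lam Hlam].
  assert (Hg1 : (1 <= g)%nat) by (destruct g; [simpl in Hg; lra | lia]).
  exists (INR ((lam + 2) * g + lam)), (INR g).
  split; [apply (le_INR 1); nia|]. split; [apply (le_INR 1); exact Hg1|].
  intros M K A HM HK HA HdM.
  destruct (sumset_contains_progression M g lam K (delta * INR M) A)
    as [a [d [Hd Hprog]]]; auto.
  - apply INR_le. rewrite mult_INR. exact HK.
  - apply HA.
  - intros i x Hi. apply (HA i Hi).
  - intros i Hi. apply (spread_of_density delta); [lra | exact HdM | apply (HA i Hi)].
  - apply HA.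
  - exists a, d. split; [lia|]. split; [apply le_INR; lia|].
    intros t Ht0 Ht. apply Hprog; [exact Ht0|].
    pose proof (pos_INR g). pose proof (pos_INR M).
    assert (INR g * IZR t <= INR g * (B * INR M ^ 2)) by (apply Rmult_le_compat_l; lra).
    assert (0 <= (INR lam * delta - INR g * B) * INR M ^ 2) by (apply Rmult_le_pos; nra).
    nra.
Qed.
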